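(* Let $p$ be an odd prime and let $k$ be an integer with $2\le k\le p-1$. Let $k^{-1}$ denote the least non-negative integer congruent to the inverse of $k$ modulo $p$, and let $K=\min\{k,k^{-1}\}$. Let $\phi$ be the orthomorphism of $\mathbb{Z}_p$ given by $\phi(x)=kx$, and let $\phi'$ be any orthomorphism of $\mathbb{Z}_p$ with $\phi'\neq\phi$. Then the number of $x\in\mathbb{Z}_p$ with $\phi(x)\neq\phi'(x)$ is at least $\log_K(p)+1$.
   Context: An orthomorphism of the cyclic group $\mathbb{Z}_p$ is a permutation $\psi$ of $\mathbb{Z}_p$ such that the map $x\mapsto \psi(x)-x$ (computed modulo $p$) is also a permutation of $\mathbb{Z}_p$. The distance between two orthomorphisms is the number of $x$ at which they differ. *)

From Stdlib Require Import Reals.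
From mathcomp Require Import all_boot all_algebra.
Set Implicit Arguments. Unset Strict Implicit. Unset Printing Implicit Defensive.
Import GRing.Theory.
Local Open Scope ring_scope.

Definition orthomorphism (p : nat) (psi : 'Z_p -> 'Z_p) : Prop :=
  bijective psi /\ bijective (fun x => psi x - x).

Definition odist (p : nat) (f g : 'Z_p -> 'Z_p) : nat :=
  #|[set x : 'Z_p | f x != g x]|%N.

Definition inv_mod (p k : nat) : nat :=
  nat_of_ord ((k%:R : 'Z_p)^-1).

Definition mulmap (p k : nat) : 'Z_p -> 'Z_p := fun x => k%:R * x.

Arguments orthomorphism p psi : clear implicits.
Arguments odist p f g : clear implicits.
Arguments mulmap p k x : clear implicits.
Arguments inv_mod p k : clear implicits.

(* Let D be the set of points where phi' differs from x |-> k x.  For v in D put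
   u = phi'^-1 (k v) and w = (k - 1)^-1 (k v - u): both lie in D, u <> v, and
   k v = u + (k - 1) w in Z_p.  For K = k^-1 use phi'^-1 instead, which differs
   from x |-> k^-1 x at as many points.  Take v0 in D and a set C containing
   v0, closed under u and w, from every point of which v0 is reachable, and let
   S = C \ {v0}.  The integer matrix of the equations
   K y_i = y_(u i) + (K - 1) y_(w i) (i in S), y = 0 off S, has nonpositive
   off-diagonal entries and nonnegative row sums, so 0 <= det <= K^|S|; a
   maximum principle along the paths to v0 shows det <> 0; and y_i = i - v0 is
   a nonzero solution mod p, so p divides det.  Hence p <= K^(|D| - 1). *)

From Stdlib Require Import Reals Lra FunctionalExtensionality.
From mathcomp Require Import all_boot all_order all_algebra ring lra.
Import GRing.Theory Num.Theory Order.TTheory.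
Set Implicit Arguments. Unset Strict Implicit. Unset Printing Implicit Defensive.

Local Open Scope ring_scope.

Lemma det_pivot_schur (F : fieldType) n (M : 'M[F]_(1 + n)) : M 0 0 != 0 ->
  \det M = M 0 0 * \det (drsubmx M - (M 0 0)^-1 *: (dlsubmx M *m ursubmx M)).
Proof.
move=> a_neq0; set a := M 0 0; set S := _ - _.
have ul_a : ulsubmx M = a%:M.
  by rewrite [ulsubmx M]mx11_scalar !mxE; congr (_%:M); congr (M _ _); apply: val_inj.
have defM : M = block_mx 1%:M 0 (a^-1 *: dlsubmx M) 1%:M *m block_mx a%:M (ursubmx M) 0 S.
  rewrite mulmx_block !mul1mx !mul0mx !addr0 -scalemxAl mul_mx_scalar.
  by rewrite scalerA mulVf // scale1r -scalemxAl /S addrC subrK -ul_a submxK.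
by rewrite {1}defM det_mulmx det_lblock det_ublock !det1 det_scalar1 !mul1r.
Qed.

Section RowDominant.
Variable R : realFieldType.

Definition row_dominant n (M : 'M[R]_n) : Prop :=
  (forall i j, i != j -> M i j <= 0) /\ (forall i, 0 <= \sum_j M i j).

Lemma row_dominant_diag_ge0 n (M : 'M[R]_n) i : row_dominant M -> 0 <= M i i.
Proof.
move=> [offdiag_le0 /(_ i)]; rewrite (bigD1 i) //= => /le_trans; apply.
by rewrite gerDl sumr_le0 // => j ji; apply: offdiag_le0; rewrite eq_sym.
Qed.

Lemma row_dominant_pivot0 n (M : 'M[R]_n.+1) :
  row_dominant M -> M 0 0 = 0 -> \det M = 0.
Proof.
move=> [offdiag_le0 rowsum_ge0] a0.
have le0 k : M 0 k <= 0.
  by have [->|k0] := eqVneq k 0; [rewrite a0 | apply: offdiag_le0; rewrite eq_sym].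
have row0 j : M 0 j = 0.
  have sum0 : \sum_k - M 0 k = 0.
    by apply/eqP; rewrite eq_le sumrN oppr_le0 rowsum_ge0 oppr_ge0 sumr_le0.
  by apply/eqP; rewrite -oppr_eq0 (psumr_eq0P _ sum0) // => k _; rewrite oppr_ge0.
by rewrite (expand_det_row _ 0) big1 // => j _; rewrite row0 mul0r.
Qed.

Lemma row_dominant_schur n (M : 'M[R]_(1 + n)) (a := M 0 0)
    (S := drsubmx M - a^-1 *: (dlsubmx M *m ursubmx M)) :
  row_dominant M -> 0 < a -> row_dominant S /\ forall i, S i i <= drsubmx M i i.
Proof.
move=> [offdiag_le0 rowsum_ge0] a_gt0.
have l0 : lshift n (0 : 'I_1) = 0 by apply: val_inj.
have SE i j :
    S i j = M (rshift 1 i) (rshift 1 j) - a^-1 * (M (rshift 1 i) 0 * M 0 (rshift 1 j)).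
  by rewrite !mxE big_ord1 !mxE l0.
have corr_ge0 i j : 0 <= a^-1 * (M (rshift 1 i) 0 * M 0 (rshift 1 j)).
  apply: mulr_ge0; first by rewrite invr_ge0 ltW.
  by apply: mulr_le0; apply: offdiag_le0; rewrite // eq_sym.
split; [split|].
- move=> i j ij; rewrite SE; have := corr_ge0 i j.
  have : M (rshift 1 i) (rshift 1 j) <= 0.
    by apply: offdiag_le0; rewrite (inj_eq (@rshift_inj _ _)).
  lra.
- have ta1 : a^-1 * a = 1 by rewrite mulVf // gt_eqF.
  have schur_ineq (c r B : R) :
      c <= 0 -> 0 <= a + r -> 0 <= c + B -> 0 <= B - a^-1 * (c * r).
    move=> c_le0 row0 rowi.
    have : 0 <= (a + r) * - (a^-1 * c).
      by apply: mulr_ge0 => //; rewrite oppr_ge0 mulr_ge0_le0 // invr_ge0 ltW.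
    have -> : (a + r) * - (a^-1 * c) = - (a^-1 * a) * c - a^-1 * (c * r) by ring.
    rewrite ta1; lra.
  move=> i; under eq_bigr do rewrite SE.
  rewrite sumrB -!mulr_sumr; apply: schur_ineq; first exact: offdiag_le0.
    by have := rowsum_ge0 0; rewrite big_split_ord big_ord1 l0.
  by have := rowsum_ge0 (rshift 1 i); rewrite big_split_ord big_ord1 l0.
- by move=> i; rewrite SE !mxE gerBl.
Qed.

Lemma row_dominant_det n (M : 'M[R]_n) :
  row_dominant M -> 0 <= \det M <= \prod_i M i i.
Proof.
elim: n M => [|n IH] M dom; first by rewrite det_mx00 big_ord0 ler01 lexx.
have [a0|a_neq0] := eqVneq (M 0 0) 0.
  rewrite row_dominant_pivot0 // lexx prodr_ge0 // => i _.
  exact: row_dominant_diag_ge0.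
have a_gt0 : 0 < M 0 0 by rewrite lt_def a_neq0 row_dominant_diag_ge0.
have [domS diagS] := row_dominant_schur dom a_gt0.
have /andP [detS_ge0 detS_le] := IH _ domS.
rewrite (det_pivot_schur a_neq0) big_ord_recl mulr_ge0 ?(ltW a_gt0) //=.
apply: ler_wpM2l; first exact: ltW.
apply: le_trans detS_le _; apply: ler_prod => i _.
rewrite row_dominant_diag_ge0 //= (le_trans (diagS i)) // !mxE.
by rewrite (_ : rshift 1 i = lift 0 i) //; apply: val_inj.
Qed.
End RowDominant.

Lemma natr_predK (R : nzSemiRingType) n : (0 < n)%N -> n.-1%:R + 1 = n%:R :> R.
Proof. by move=> n_gt0; rewrite natr1 prednK. Qed.

Section Reachability.
Variable T : finType.

Definition frel2 (u w : T -> T) : rel T := [rel x y | (u x == y) || (w x == y)].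

Lemma connect_stable (e : rel T) (P : pred T) :
  (forall x y, e x y -> P x -> P y) -> forall x y, connect e x y -> P x -> P y.
Proof.
move=> stepP x _ /connectP [q xq ->].
by elim: q x xq => [|y q IHq] x //= /andP [exy yq] Px; apply: IHq yq (stepP _ _ exy Px).
Qed.

Lemma exists_recurrent_point (e : rel T) (D : {set T}) :
  D != set0 -> (forall x y, e x y -> x \in D -> y \in D) ->
  exists2 v0, v0 \in D & forall x, connect e v0 x -> connect e x v0.
Proof.
move=> /set0Pn [x0 x0D] closedD.
pose reach x := [set y | connect e x y].
have [v0 v0D v0_min] := arg_minnP (fun v => #|reach v|) x0D.
exists v0 => // x v0x.
have xD : x \in D by apply: connect_stable v0x v0D.
have sub : reach x \subset reach v0.
  by apply/subsetP => y; rewrite !inE; apply: connect_trans.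
have /eqP reach_eq : reach x == reach v0 by rewrite eqEcard sub v0_min.
suff : v0 \in reach x by rewrite inE.
by rewrite reach_eq inE connect0.
Qed.

Lemma exists_rooted_closed_set (u w : T -> T) (D : {set T}) :
  D != set0 -> (forall v, v \in D -> u v \in D /\ w v \in D) ->
  exists v0, exists2 S : {set T}, v0 \notin S &
    [/\ v0 |: S \subset D,
        {in v0 |: S, forall x, u x \in v0 |: S /\ w x \in v0 |: S} &
        {in S, forall x, connect (frel2 u w) x v0}].
Proof.
move=> D_neq0 stableD.
have closedD x y : frel2 u w x y -> x \in D -> y \in D.
  by move=> /orP [] /eqP <- /stableD [].
have [v0 v0D v0_rec] := exists_recurrent_point D_neq0 closedD.
pose C := [set x | connect (frel2 u w) v0 x].
have v0C : v0 \in C by rewrite inE connect0.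
exists v0, (C :\ v0); first by rewrite !inE eqxx.
rewrite setD1K //; split.
- by apply/subsetP => x; rewrite inE => /connect_stable; apply.
- move=> x; rewrite inE => v0x.
  by split; rewrite inE; apply: (connect_trans v0x); apply: connect1;
    rewrite /frel2 /= eqxx ?orbT.
- by move=> x; rewrite !inE => /andP [_ /v0_rec].
Qed.

Variables (R : realFieldType) (K : nat) (S : {set T}) (u w : T -> T) (v0 : T).
Hypotheses (K_gt1 : (1 < K)%N) (v0S : v0 \notin S)
  (S_to_v0 : forall x, x \in S -> connect (frel2 u w) x v0).

Lemma weighted_mean_le0 (y : T -> R) :
  (forall i, i \notin S -> y i = 0) ->
  (forall i, i \in S -> K%:R * y i = y (u i) + K.-1%:R * y (w i)) ->
  forall i, y i <= 0.
Proof.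
move=> y_out y_mean i; rewrite leNgt; apply/negP => yi_gt0.
(* A positive maximum spreads to both successors, hence along the path to v0. *)
pose j := [arg max_(j > i) y j]%O.
have y_le_yj k : y k <= y j.
  by rewrite /j; case: (arg_maxP (i0 := i) (P := predT) y isT) => k' _; apply.
have yj_gt0 : 0 < y j := lt_le_trans yi_gt0 (y_le_yj i).
have inS x : 0 < y x -> x \in S.
  by move=> yx; apply: contraTT yx => /y_out ->; rewrite ltxx.
have K1_gt0 : (0 : R) < K.-1%:R by rewrite ltr0n -ltnS prednK // ltnW.
have max_step x z : frel2 u w x z -> y x == y j -> y z == y j.
  move=> /orP xz /eqP yx.
  have xS : x \in S by apply: inS; rewrite yx.
  have := y_mean x xS; rewrite yx -(natr_predK _ (ltnW K_gt1)) => mean.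
  have := y_le_yj (u x); have := y_le_yj (w x) => le_w le_u.
  have yu : y (u x) = y j by nra.
  have yw : y (w x) = y j by nra.
  by case: xz => /eqP <-; apply/eqP.
have := connect_stable max_step (S_to_v0 (inS j yj_gt0)) (eqxx _).
by rewrite y_out // eq_sym => /eqP/esym yj0; rewrite yj0 ltxx in yj_gt0.
Qed.

Lemma weighted_mean_eq0 (y : T -> R) :
  (forall i, i \notin S -> y i = 0) ->
  (forall i, i \in S -> K%:R * y i = y (u i) + K.-1%:R * y (w i)) ->
  y =1 fun=> 0.
Proof.
move=> y_out y_mean i; apply/eqP; rewrite eq_le weighted_mean_le0 //= -oppr_le0.
apply: (weighted_mean_le0 (y := fun i => - y i)) => [k /y_out -> | k /y_mean yk].
  by rewrite oppr0.
by rewrite mulrN yk opprD mulrN.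
Qed.
End Reachability.

Lemma sumr_delta (R : nzSemiRingType) (T : finType) (a : T) (F : T -> R) :
  \sum_j (a == j)%:R * F j = F a.
Proof.
rewrite (bigD1 a) //= eqxx mul1r big1 ?addr0 // => j ja.
by rewrite eq_sym (negPf ja) mul0r.
Qed.

Section RecurrenceMatrix.
Variables (n K : nat) (S : {set 'I_n}) (u w : 'I_n -> 'I_n).
Hypothesis K_gt0 : (0 < K)%N.

Definition recurrence_mx (R : nzRingType) : 'M[R]_n := \matrix_(i, j)
  if i \in S then
    K%:R * (i == j)%:R - (j \in S)%:R * ((u i == j)%:R + K.-1%:R * (w i == j)%:R)
  else (i == j)%:R.

Lemma recurrence_mxE (R : comNzRingType) (y : 'cV[R]_n) i :
  (recurrence_mx R *m y) i 0 =
  if i \in S then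
    K%:R * y i 0 - ((u i \in S)%:R * y (u i) 0 + K.-1%:R * ((w i \in S)%:R * y (w i) 0))
  else y i 0.
Proof.
rewrite mxE; under eq_bigr do rewrite mxE.
case: (i \in S); last exact: sumr_delta.
rewrite (eq_bigr (fun j => K%:R * ((i == j)%:R * y j 0) -
  ((u i == j)%:R * ((j \in S)%:R * y j 0) +
   K.-1%:R * ((w i == j)%:R * ((j \in S)%:R * y j 0))))); last by move=> j _; ring.
by rewrite sumrB big_split /= -!mulr_sumr !sumr_delta.
Qed.

Lemma map_recurrence_mx (R : nzRingType) : map_mx intr (recurrence_mx int) = recurrence_mx R.
Proof.
apply/matrixP => i j; rewrite !mxE.
by case: (i \in S); rewrite ?(rmorphB, rmorphM, rmorphD, rmorph_nat).
Qed.

Section Real.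
Variable R : realFieldType.

Lemma recurrence_mx_row_dominant : row_dominant (recurrence_mx R).
Proof.
split=> [i j ij | i].
  rewrite mxE (negPf ij) mulr0 sub0r; case: (i \in S) => //.
  by rewrite oppr_le0 mulr_ge0 // addr_ge0 // mulr_ge0.
have -> : \sum_j recurrence_mx R i j = (recurrence_mx R *m (const_mx 1 : 'cV_n)) i 0.
  by rewrite mxE; apply: eq_bigr => j _; rewrite [const_mx 1 _ _]mxE mulr1.
rewrite recurrence_mxE !mxE !mulr1; case: (i \in S) => //.
rewrite subr_ge0 -(natr_predK _ K_gt0) addrC lerD //; last by case: (u i \in S).
by rewrite ler_piMr //; case: (w i \in S).
Qed.

Lemma recurrence_mx_det_bounds : 0 <= \det (recurrence_mx R) <= (K ^ #|S|)%:R.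
Proof.
have /andP [-> /le_trans -> //] := row_dominant_det recurrence_mx_row_dominant.
rewrite -prod_nat_const natr_prod [leRHS]big_mkcond /=.
apply: ler_prod => i _; rewrite row_dominant_diag_ge0 /=; last first.
  exact: recurrence_mx_row_dominant.
rewrite mxE eqxx mulr1; case: (i \in S) => //.
by rewrite gerBl mulr_ge0 ?addr_ge0 ?mulr_ge0.
Qed.

Lemma recurrence_mx_det_neq0 (v0 : 'I_n) :
  (1 < K)%N -> v0 \notin S -> (forall x, x \in S -> connect (frel2 u w) x v0) ->
  \det (recurrence_mx R) != 0.
Proof.
move=> K_gt1 v0S S_to_v0; apply/negP; rewrite -det_tr => /det0P [v v_neq0].
rewrite -[v]trmxK -trmx_mul -trmx0 => /trmx_inj ker_v.
pose y j := v 0 j.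
have ker_at i := congr1 (fun M : 'cV[R]_n => M i 0) ker_v.
have y_out i : i \notin S -> y i = 0.
  by move=> iS; have := ker_at i; rewrite recurrence_mxE (negPf iS) !mxE.
have y_restr x : (x \in S)%:R * v 0 x = v 0 x.
  by case: (boolP (x \in S)) => [_|/y_out]; rewrite ?mul1r // /y => ->; rewrite mulr0.
have y_mean i : i \in S -> K%:R * y i = y (u i) + K.-1%:R * y (w i).
  move=> iS; have := ker_at i.
  by rewrite recurrence_mxE iS !mxE !y_restr => /eqP; rewrite subr_eq0 => /eqP.
have y0 := weighted_mean_eq0 K_gt1 v0S S_to_v0 y_out y_mean.
by move/negP: v_neq0; apply; apply/eqP/matrixP => i j; rewrite (ord1 i) mxE; have := y0 j.
Qed.
End Real.

Lemma recurrence_mx_det_int (v0 : 'I_n) :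
  (1 < K)%N -> v0 \notin S -> (forall x, x \in S -> connect (frel2 u w) x v0) ->
  exists2 m, \det (recurrence_mx int) = m%:Z & (0 < m <= K ^ #|S|)%N.
Proof.
move=> K_gt1 v0S S_to_v0.
have det_rat : \det (recurrence_mx rat) = (\det (recurrence_mx int))%:~R.
  by rewrite -map_recurrence_mx det_map_mx.
have /andP [det_ge0 det_le] := recurrence_mx_det_bounds rat.
have det_neq0 := recurrence_mx_det_neq0 rat K_gt1 v0S S_to_v0.
rewrite det_rat ler0z in det_ge0.
rewrite det_rat -(gez0_abs det_ge0) -pmulrn in det_le det_neq0.
exists `|\det (recurrence_mx int)|%N; first by rewrite gez0_abs.
by rewrite lt0n -(pnatr_eq0 rat) det_neq0 -(ler_nat rat).
Qed.

Lemma recurrence_mx_det_nonunit (R : comUnitRingType) (f : 'I_n -> R) (v0 : 'I_n) :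
  v0 \notin S ->
  (forall i, i \in S -> [/\ u i \in v0 |: S, w i \in v0 |: S &
                           K%:R * f i = f (u i) + K.-1%:R * f (w i)]) ->
  (exists2 j, j \in S & f j != f v0) ->
  \det (recurrence_mx R) \isn't a GRing.unit.
Proof.
move=> v0S mean [j jS fj]; apply/negP => det_unit.
(* Constants solve the recurrence since 1 + (K - 1) = K, hence so does f - f v0. *)
pose Y : 'cV[R]_n := \col_x (if x \in S then f x - f v0 else 0).
have Y_restr x : x \in v0 |: S -> (x \in S)%:R * Y x 0 = f x - f v0.
  rewrite !mxE in_setU1; case: (boolP (x \in S)) => [_ _|_]; first by rewrite mul1r.
  by rewrite orbF => /eqP ->; rewrite subrr mul0r.
have kerY : recurrence_mx R *m Y = 0.
  apply/colP => i; rewrite recurrence_mxE [RHS]mxE.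
  case: ifP => iS; last by rewrite mxE iS.
  have [uS wS mean_i] := mean i iS.
  by rewrite !Y_restr // mxE iS mulrBr mean_i -(natr_predK _ K_gt0); ring.
have : Y = 0 by rewrite -[Y](mulKmx (x := recurrence_mx R)) ?unitmxE // kerY mulmx0.
by move/colP/(_ j); rewrite !mxE jS => /eqP; rewrite subr_eq0 (negPf fj).
Qed.
End RecurrenceMatrix.

Lemma prime_le_expn_card (p K : nat) (D : {set 'Z_p}) (u w : 'Z_p -> 'Z_p) :
  prime p -> (1 < K)%N -> D != set0 ->
  (forall v, v \in D -> [/\ u v \in D, w v \in D, u v != v &
                           K%:R * v = u v + K.-1%:R * w v]) ->
  (p <= K ^ #|D|.-1)%N.
Proof.
move=> p_prime K_gt1 D_neq0 stepD.
have K_gt0 : (0 < K)%N by apply: ltnW.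
have [v0 [S v0S [CD closedC S_to_v0]]] := exists_rooted_closed_set D_neq0
  (fun v vD => let: And4 uD wD _ _ := stepD v vD in conj uD wD).
have [m det_m /andP [m_gt0 m_le]] := recurrence_mx_det_int K_gt0 K_gt1 v0S S_to_v0.
have p_dvd_m : (p %| m)%N.
  have := recurrence_mx_det_nonunit K_gt0 (u := u) (w := w) (R := 'Z_p) (f := id) v0S.
  rewrite -map_recurrence_mx det_map_mx /= det_m -pmulrn.
  rewrite unitZpE ?prime_gt1 // prime_coprime // negbK; apply.
    move=> i iS; have iC : i \in v0 |: S by rewrite in_setU1 iS orbT.
    have [uC wC] := closedC i iC.
    by have [_ _ _ ->] := stepD i (subsetP CD i iC).
  have [_ _ uv0_neq _] := stepD v0 (subsetP CD v0 (setU11 v0 S)).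
  exists (u v0) => //; have [+ _] := closedC v0 (setU11 v0 S).
  by rewrite in_setU1 (negPf uv0_neq).
apply: leq_trans (dvdn_leq m_gt0 p_dvd_m) (leq_trans m_le _).
rewrite leq_pexp2l //; have := subset_leq_card CD.
by rewrite cardsU1 v0S add1n; case: #|D|.
Qed.

Lemma mulmap_disagreement_split (R : comUnitRingType) (a : R) (f g : R -> R) :
  a \is a GRing.unit -> a - 1 \is a GRing.unit -> cancel g f ->
  injective (fun x => f x - x) ->
  forall v, a * v != f v ->
  let u := g (a * v) in let w := (a - 1)^-1 * (a * v - u) in
  [/\ a * u != f u, a * w != f w, u != v & a * v = u + (a - 1) * w].
Proof.
move=> a_unit a1_unit gK f_orth v v_moved u w.
have fu : f u = a * v by rewrite /u gK.
have u_neq_v : u != v by apply: contra_neq v_moved => u_v; rewrite -fu u_v.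
have a1w : (a - 1) * w = a * v - u by rewrite /w mulrA mulrV // mul1r.
split => //; last by rewrite a1w addrC subrK.
- by rewrite fu; apply: contra_neq u_neq_v => /(mulrI a_unit).
- apply: contra_neq u_neq_v => aw.
  have w_u : w = u by apply: f_orth => /=; rewrite -aw fu -a1w mulrBl mul1r.
  by apply: (mulrI a_unit); rewrite -w_u aw w_u fu.
Qed.

Lemma unit_Zp_nat (p j : nat) :
  prime p -> (0 < j < p)%N -> (j%:R : 'Z_p) \is a GRing.unit.
Proof.
move=> p_prime /andP [j_gt0 j_lt_p].
by rewrite unitZpE ?prime_gt1 // prime_coprime // gtnNdvd.
Qed.

Lemma prime_le_expn_odist (p K : nat) (f : 'Z_p -> 'Z_p) :
  prime p -> (2 <= K < p)%N -> orthomorphism p f -> (0 < odist p (mulmap p K) f)%N ->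
  (p <= K ^ (odist p (mulmap p K) f).-1)%N.
Proof.
move=> p_prime /andP [K_ge2 K_lt_p] [[g fK gK] /bij_inj f_orth] d_gt0.
have K_gt0 : (0 < K)%N by apply: ltnW.
set a : 'Z_p := K%:R.
have K1 : K.-1%:R = a - 1 by rewrite /a -(natr_predK _ K_gt0) addrK.
have a_unit : a \is a GRing.unit by rewrite unit_Zp_nat ?K_gt0.
have a1_unit : a - 1 \is a GRing.unit.
  by rewrite -K1 unit_Zp_nat // -subn1 subn_gt0 K_ge2 (leq_ltn_trans (leq_subr 1 K)).
apply: (prime_le_expn_card (u := fun v => g (a * v))
                           (w := fun v => (a - 1)^-1 * (a * v - g (a * v)))) => //.
  by rewrite -card_gt0.
move=> v; rewrite !inE K1 => v_moved.
exact: mulmap_disagreement_split a_unit a1_unit gK f_orth v v_moved.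
Qed.

Lemma orthomorphism_inv (p : nat) (f g : 'Z_p -> 'Z_p) :
  orthomorphism p f -> cancel f g -> cancel g f -> orthomorphism p g.
Proof.
move=> [_ /bij_inj f_orth] fK gK; split; first exact: Bijective gK fK.
apply: injF_bij => x y /= gxy; rewrite -[x]gK -[y]gK; congr f.
by apply: f_orth => /=; rewrite !gK -(opprB (g x)) -(opprB (g y)) gxy.
Qed.

Lemma odist_mulmap_inv (p k k' : nat) (f g : 'Z_p -> 'Z_p) :
  k%:R * k'%:R = 1 :> 'Z_p -> cancel f g -> cancel g f ->
  odist p (mulmap p k') g = odist p (mulmap p k) f.
Proof.
move=> kk' fK gK; rewrite /odist -[in RHS](card_preimset _ (can_inj gK)).
apply: eq_card => y; rewrite !inE /mulmap gK.
apply/idP/idP; apply: contra_neq => e.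
  by rewrite -{1}e mulrA [k'%:R * _]mulrC kk' mul1r.
by rewrite -e mulrA kk' mul1r.
Qed.

Lemma inv_mod_bounds (p k : nat) : prime p -> (2 <= k < p)%N -> (2 <= inv_mod p k < p)%N.
Proof.
move=> p_prime /andP [k_ge2 k_lt_p]; have p_gt1 := prime_gt1 p_prime.
have k_unit : (k%:R : 'Z_p) \is a GRing.unit by rewrite unit_Zp_nat // ltnW.
have k'E : (inv_mod p k)%:R = (k%:R : 'Z_p)^-1 by rewrite natr_Zp.
have -> /= : (inv_mod p k < p)%N by rewrite -[p in (_ < p)%N](Zp_cast p_gt1) ltn_ord.
move: k'E; case: (inv_mod p k) => [|[|//]] /= k'E.
  by move: k_unit; rewrite -unitrV -k'E unitr0.
have k1 : (k%:R : 'Z_p) = 1 by rewrite -[k%:R]invrK -k'E invr1.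
have := congr1 (@nat_of_ord _) k1.
by rewrite val_Zp_nat // /= Zp_cast // !modn_small // => k_eq1; rewrite k_eq1 in k_ge2.
Qed.

Lemma odist_gt0 (p : nat) (f g : 'Z_p -> 'Z_p) : f <> g -> (0 < odist p f g)%N.
Proof.
move=> f_neq_g; rewrite /odist card_gt0; apply/set0Pn.
case: (pickP (fun x => f x != g x)) => [x fgx | f_eq_g]; first by exists x; rewrite inE.
by case: f_neq_g; apply: functional_extensionality => x; apply/eqP/negbFE/f_eq_g.
Qed.

Local Close Scope ring_scope.

Section LogBound.
Local Open Scope R_scope.

Lemma logb_le_of_le_expn (b n d : nat) :
  (2 <= b)%N -> (0 < n)%N -> (n <= b ^ d)%N -> ln (INR n) / ln (INR b) <= INR d.
Proof.
move=> b_ge2 n_gt0 le_n_bd.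
have b_gt1 : 1 < INR b by apply: lt_1_INR; apply/ssrnat.ltP.
have lnb_gt0 : 0 < ln (INR b) by rewrite -ln_1; apply: ln_increasing; Lra.lra.
have n_pos : 0 < INR n by apply: lt_0_INR; apply/ssrnat.ltP.
have le_n_bd_R : INR n <= INR b ^ d.
  have -> : INR b ^ d = INR (b ^ d).
    by elim: d {le_n_bd} => //= d IH; rewrite expnS mult_INR IH.
  exact/le_INR/ssrnat.leP.
have le_ln : ln (INR n) <= INR d * ln (INR b).
  rewrite -ln_pow; last Lra.lra.
  case: (Rle_lt_or_eq_dec _ _ le_n_bd_R) => [lt | ->]; last exact: Rle_refl.
  exact/Rlt_le/ln_increasing.
apply: (Rmult_le_reg_r _ _ _ lnb_gt0).
by rewrite /Rdiv Rmult_assoc Rinv_l; [Lra.lra | apply: Rgt_not_eq].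
Qed.
End LogBound.

Theorem theorem6p1 (p k : nat) (phi' : 'Z_p -> 'Z_p) :
  prime p -> odd p ->
  (2 <= k)%N -> (k <= p.-1)%N ->
  orthomorphism p phi' ->
  mulmap p k <> phi' ->
  let K := minn k (inv_mod p k) in
  Rge (INR (odist p (mulmap p k) phi')) (Rplus (Rdiv (ln (INR p)) (ln (INR K))) (INR 1)).
Proof.
move=> p_prime _ k_ge2 k_le phi_orth phi_neq K.
have k_lt_p : (k < p)%N by rewrite (leq_ltn_trans k_le) // ltn_predL prime_gt0.
have k_range : (2 <= k < p)%N by rewrite k_ge2.
have k'_range := inv_mod_bounds p_prime k_range.
have [[g phiK gK] _] := phi_orth.
have kk' : (k%:R * (inv_mod p k)%:R = 1 :> 'Z_p)%R.
  by rewrite /inv_mod natr_Zp mulrV // unit_Zp_nat // (ltnW k_ge2).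
have d_gt0 := odist_gt0 phi_neq.
have le_p : (p <= K ^ (odist p (mulmap p k) phi').-1)%N.
  rewrite /K; case: (leqP k (inv_mod p k)) => _.
    exact: prime_le_expn_odist.
  rewrite -(odist_mulmap_inv kk' phiK gK).
  apply: prime_le_expn_odist => //; first exact: orthomorphism_inv phi_orth phiK gK.
  by rewrite (odist_mulmap_inv kk' phiK gK).
have K_ge2 : (2 <= K)%N by rewrite leq_min k_ge2; case/andP: k'_range.
have := logb_le_of_le_expn K_ge2 (prime_gt0 p_prime) le_p.
by rewrite -{2}(prednK d_gt0) S_INR /= => le; apply: Rle_ge; Lra.lra.
Qed.
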